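(* For the wound-string system of the context with parameters $(a,C,m)=(\tfrac12,1,-1)$, the fixed points are exactly the four points $(x_1,x_2)\in\{(2,1),(2,-1),(-2,1),(-2,-1)\}$. At each of them, the deviation equations $\ddot\xi_i+2N^i_j\dot\xi_j+2\frac{\partial G^i}{\partial x_j}\xi_j=0$ (coefficients evaluated at $(x,y)=(\bar x,0)$) reduce to $\ddot\xi_1+\tfrac14\xi_1=0$, $\ddot\xi_2+\tfrac14\xi_2=0$; with $\xi(0)=0$, $\dot\xi(0)=(\xi_{10},\xi_{20})\ne0$ the solution is $\xi_i(t)=2\xi_{i0}\sin(t/2)$, so $\frac{\xi_1(t)^2+\xi_2(t)^2}{\xi_{10}^2+\xi_{20}^2}=4\sin^2(t/2)<t^2$ for small $t>0$, and all four fixed points are Jacobi stable (the deviation curvature tensor there equals $-\tfrac14 I_2$).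
   Context: Wound-string system: $\ddot x_1+2G^1=0$, $\ddot x_2+2G^2=0$, $y_i=\dot x_i$, with $G^1=\frac{x_1}{2a^2x_1^2+2m^2x_2^2}\big[a^2(1-y_1^2)-y_2^2-C^2\frac{(a^2x_1^2+m^2x_2^2)^2}{x_1^4x_2^2}\big]$, $G^2=\frac{x_2}{2a^2x_1^2+2m^2x_2^2}\big[m^2(a^2(1-y_1^2)-y_2^2)-a^2C^2\frac{(a^2x_1^2+m^2x_2^2)^2}{x_1^2x_2^4}\big]$. Fixed points: $(x_1,x_2)$ with $x_1x_2\neq0$ and $G^1(x,0)=G^2(x,0)=0$. Einstein summation; $N^i_j=\partial G^i/\partial y_j$, $G^i_{j\ell}=\partial N^i_j/\partial y_\ell$, $P^i_j=-2\frac{\partial G^i}{\partial x_j}-2G^\ell G^i_{j\ell}+y_\ell\frac{\partial N^i_j}{\partial x_\ell}+N^i_\ell N^\ell_j$. Jacobi stable: all eigenvalues of $(P^i_j)$ at $(\bar x,0)$ have strictly negative real parts. *)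

From Stdlib Require Import Reals Lra.
From Coquelicot Require Import Coquelicot.
Open Scope R_scope.

(* Points x = (x_1, x_2) and y = (y_1, y_2) are represented as functions nat -> R,
   with the paper's index 1 (resp. 2) encoded as 0 (resp. 1). *)

Definition sum2 (f : nat -> R) : R := f 0%nat + f 1%nat.

Definition upd (v : nat -> R) (k : nat) (t : R) : nat -> R :=
  fun l => if Nat.eqb l k then t else v l.

Definition zerov : nat -> R := fun _ => 0.

Definition G1 (a Cc m : R) (x y : nat -> R) : R :=
  x 0%nat / (2 * a ^ 2 * x 0%nat ^ 2 + 2 * m ^ 2 * x 1%nat ^ 2) *
  (a ^ 2 * (1 - y 0%nat ^ 2) - y 1%nat ^ 2
   - Cc ^ 2 * (a ^ 2 * x 0%nat ^ 2 + m ^ 2 * x 1%nat ^ 2) ^ 2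
       / (x 0%nat ^ 4 * x 1%nat ^ 2)).

Definition G2 (a Cc m : R) (x y : nat -> R) : R :=
  x 1%nat / (2 * a ^ 2 * x 0%nat ^ 2 + 2 * m ^ 2 * x 1%nat ^ 2) *
  (m ^ 2 * (a ^ 2 * (1 - y 0%nat ^ 2) - y 1%nat ^ 2)
   - a ^ 2 * Cc ^ 2 * (a ^ 2 * x 0%nat ^ 2 + m ^ 2 * x 1%nat ^ 2) ^ 2
       / (x 0%nat ^ 2 * x 1%nat ^ 4)).

Definition G (a Cc m : R) (i : nat) (x y : nat -> R) : R :=
  match i with 0%nat => G1 a Cc m x y | _ => G2 a Cc m x y end.

Definition dGdx (a Cc m : R) (i j : nat) (x y : nat -> R) : R :=
  Derive (fun t => G a Cc m i (upd x j t) y) (x j).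

Definition Nc (a Cc m : R) (i j : nat) (x y : nat -> R) : R :=
  Derive (fun t => G a Cc m i x (upd y j t)) (y j).

Definition Gc (a Cc m : R) (i j l : nat) (x y : nat -> R) : R :=
  Derive (fun t => Nc a Cc m i j x (upd y l t)) (y l).

Definition dNdx (a Cc m : R) (i j l : nat) (x y : nat -> R) : R :=
  Derive (fun t => Nc a Cc m i j (upd x l t) y) (x l).

Definition P (a Cc m : R) (i j : nat) (x y : nat -> R) : R :=
  - 2 * dGdx a Cc m i j x y
  - 2 * sum2 (fun l => G a Cc m l x y * Gc a Cc m i j l x y)
  + sum2 (fun l => y l * dNdx a Cc m i j l x y)
  + sum2 (fun l => Nc a Cc m i l x y * Nc a Cc m l j x y).

Definition fixed_point (a Cc m : R) (x : nat -> R) : Prop :=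
  x 0%nat * x 1%nat <> 0 /\ G a Cc m 0 x zerov = 0 /\ G a Cc m 1 x zerov = 0.

Definition is_eigenvalue2 (M : nat -> nat -> R) (lam : C) : Prop :=
  exists v : nat -> C, (v 0%nat <> 0%C \/ v 1%nat <> 0%C) /\
    forall i : nat, (i < 2)%nat ->
      Cplus (Cmult (RtoC (M i 0%nat)) (v 0%nat)) (Cmult (RtoC (M i 1%nat)) (v 1%nat))
      = Cmult lam (v i).

Definition jacobi_stable (a Cc m : R) (xb : nat -> R) : Prop :=
  forall lam : C, is_eigenvalue2 (fun i j => P a Cc m i j xb zerov) lam -> Re lam < 0.

(* At y = 0 the spray coefficients are even in y, so N^i_j vanishes there, and at a
   fixed point, where also G^i = 0, the deviation tensor reduces to P = -2 dG/dx.
   Clearing denominators, the fixed-point equations read a^2 x1^4 x2^2 = C^2 S^2 and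
   m^2 x1^2 x2^4 = C^2 S^2 with S = a^2 x1^2 + m^2 x2^2; for (a,C,m) = (1/2,1,-1) they
   force x1^2 = 4 x2^2 and then x2^2 = 1.  At the four points dG^i/dx_j = delta_ij / 8,
   so the deviation equations decouple into oscillators xi'' + xi/4 = 0, whose solution
   is pinned down by energy conservation, and P = -I/4 has the single eigenvalue -1/4. *)

From Stdlib Require Import Reals Lra Lia.
From Coquelicot Require Import Coquelicot.
Open Scope R_scope.

Lemma pow2_gt_0 (x : R) : x <> 0 -> 0 < x ^ 2.
Proof. intro Hx. rewrite <- Rsqr_pow2. now apply Rsqr_pos_lt. Qed.

Lemma sq_eq_cases (x c : R) : x ^ 2 = c ^ 2 -> x = c \/ x = - c.
Proof.
intro H. assert (Hf : (x - c) * (x + c) = 0) by lra.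
apply Rmult_integral in Hf; lra.
Qed.

Lemma sin_sq_lt (u : R) : 0 < u -> sin u ^ 2 < u ^ 2.
Proof.
intro Hu.
assert (Hlt := sin_lt_x u Hu).
assert (Hgt : - u < sin u).
{ destruct (Rlt_or_le u 2) as [Hu2 | Hu2].
  - assert (0 < sin u) by (apply sin_pos_tech; lra). lra.
  - assert (Hb := SIN_bound u). lra. }
nra.
Qed.

Lemma harmonic_oscillator_sol (w c : R) (f df : R -> R) : w <> 0 ->
  (forall t, is_derive f t (df t)) -> (forall t, ex_derive df t) ->
  (forall t, Derive df t + w ^ 2 * f t = 0) -> f 0 = 0 -> df 0 = c ->
  forall t, f t = c / w * sin (w * t).
Proof.
intros Hw Hf Hdf Heq Hf0 Hdf0.
(* Conserved because f'' = - w^2 f; it vanishes at 0, hence everywhere. *)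
set (E := fun t => w ^ 2 * (f t - c / w * sin (w * t)) ^ 2 + (df t - c * cos (w * t)) ^ 2).
assert (HE : forall t, is_derive E t 0).
{ intro t. unfold E.
  replace 0 with (2 * (df t - c * cos (w * t)) * (Derive df t + w ^ 2 * f t)) by (rewrite Heq; ring).
  auto_derive; [now split; [exists (df t) | split] |].
  change (Derive (fun x => df x) t) with (Derive df t).
  replace (Derive (fun x => f x) t) with (df t) by (symmetry; apply is_derive_unique, Hf).
  field; exact Hw. }
assert (Ec : forall t, E t = E 0).
{ intro t. destruct (Rtotal_order t 0) as [Hlt | [-> | Hgt]].
  - apply (eq_is_derive E t 0); auto.
  - reflexivity.
  - symmetry. apply (eq_is_derive E 0 t); auto. }
intro t. specialize (Ec t). unfold E in Ec.
rewrite Hf0, Hdf0, Rmult_0_r, sin_0, cos_0 in Ec.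
assert (Hw2 := pow2_gt_0 w Hw).
set (A := f t - c / w * sin (w * t)) in Ec.
assert (HA := pow2_ge_0 A).
assert (HB := pow2_ge_0 (df t - c * cos (w * t))).
assert (HA0 : w ^ 2 * A ^ 2 = 0).
{ assert (0 <= w ^ 2 * A ^ 2) by (apply Rmult_le_pos; lra). lra. }
apply Rmult_integral in HA0 as [HA0 | HA0]; [lra |].
rewrite <- Rsqr_pow2 in HA0. apply Rsqr_0_uniq in HA0. unfold A in HA0. lra.
Qed.

Lemma is_eigenvalue2_scalar (M : nat -> nat -> R) (mu : R) (lam : C) :
  (forall i j, (i < 2)%nat -> (j < 2)%nat -> M i j = if Nat.eqb i j then mu else 0) ->
  is_eigenvalue2 M lam -> lam = RtoC mu.
Proof.
intros HM [v [Hv Hlam]].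
assert (Hcancel : forall z : C, z <> 0%C -> (RtoC mu * z = lam * z)%C -> lam = RtoC mu).
{ intros z Hz Ez. replace lam with (lam * z / z)%C by (field; exact Hz).
  rewrite <- Ez. field; exact Hz. }
destruct Hv as [Hv | Hv]; apply (Hcancel _ Hv).
- assert (E := Hlam 0%nat ltac:(lia)). rewrite !HM in E by lia.
  simpl Nat.eqb in E. now rewrite Cmult_0_l, Cplus_0_r in E.
- assert (E := Hlam 1%nat ltac:(lia)). rewrite !HM in E by lia.
  simpl Nat.eqb in E. now rewrite Cmult_0_l, Cplus_0_l in E.
Qed.

Definition quad_form (a m : R) (x : nat -> R) : R := a ^ 2 * x 0%nat ^ 2 + m ^ 2 * x 1%nat ^ 2.

Lemma G1_zerov_scaled (a Cc m : R) (x : nat -> R) :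
  x 0%nat <> 0 -> x 1%nat <> 0 -> quad_form a m x <> 0 ->
  G a Cc m 0 x zerov * (2 * quad_form a m x * x 0%nat ^ 3 * x 1%nat ^ 2)
  = a ^ 2 * x 0%nat ^ 4 * x 1%nat ^ 2 - Cc ^ 2 * quad_form a m x ^ 2.
Proof.
unfold G, G1, quad_form, zerov; intros H0 H1 HS.
field; repeat split; auto. contradict HS; lra.
Qed.

Lemma G2_zerov_scaled (a Cc m : R) (x : nat -> R) :
  x 0%nat <> 0 -> x 1%nat <> 0 -> quad_form a m x <> 0 ->
  G a Cc m 1 x zerov * (2 * quad_form a m x * x 0%nat ^ 2 * x 1%nat ^ 3)
  = a ^ 2 * (m ^ 2 * x 0%nat ^ 2 * x 1%nat ^ 4 - Cc ^ 2 * quad_form a m x ^ 2).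
Proof.
unfold G, G2, quad_form, zerov; intros H0 H1 HS.
field; repeat split; auto. contradict HS; lra.
Qed.

Lemma fixed_point_iff_eqns (a Cc m : R) (x : nat -> R) : a <> 0 ->
  fixed_point a Cc m x <->
  x 0%nat * x 1%nat <> 0 /\
  a ^ 2 * x 0%nat ^ 4 * x 1%nat ^ 2 = Cc ^ 2 * quad_form a m x ^ 2 /\
  m ^ 2 * x 0%nat ^ 2 * x 1%nat ^ 4 = Cc ^ 2 * quad_form a m x ^ 2.
Proof.
intro Ha; unfold fixed_point.
enough (Hx : x 0%nat * x 1%nat <> 0 ->
   (G a Cc m 0 x zerov = 0 <-> a ^ 2 * x 0%nat ^ 4 * x 1%nat ^ 2 = Cc ^ 2 * quad_form a m x ^ 2) /\
   (G a Cc m 1 x zerov = 0 <-> m ^ 2 * x 0%nat ^ 2 * x 1%nat ^ 4 = Cc ^ 2 * quad_form a m x ^ 2))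
  by (split; intros [H E]; destruct (Hx H) as [[] []]; tauto).
intro Hx.
assert (H0 : x 0%nat <> 0) by (contradict Hx; rewrite Hx; ring).
assert (H1 : x 1%nat <> 0) by (contradict Hx; rewrite Hx; ring).
assert (HS : 0 < quad_form a m x).
{ unfold quad_form. assert (0 < a ^ 2 * x 0%nat ^ 2) by (apply Rmult_lt_0_compat; apply pow2_gt_0; auto).
  assert (0 <= m ^ 2 * x 1%nat ^ 2) by (apply Rmult_le_pos; apply pow2_ge_0). lra. }
assert (E1 := G1_zerov_scaled a Cc m x H0 H1 ltac:(lra)).
assert (E2 := G2_zerov_scaled a Cc m x H0 H1 ltac:(lra)).
assert (K1 : 2 * quad_form a m x * x 0%nat ^ 3 * x 1%nat ^ 2 <> 0)
  by (repeat apply Rmult_integral_contrapositive_currified; auto using pow_nonzero; lra).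
assert (K2 : 2 * quad_form a m x * x 0%nat ^ 2 * x 1%nat ^ 3 <> 0)
  by (repeat apply Rmult_integral_contrapositive_currified; auto using pow_nonzero; lra).
assert (Ka : a ^ 2 <> 0) by auto using pow_nonzero.
split; split; intro H.
- rewrite H, Rmult_0_l in E1; lra.
- rewrite H, Rminus_diag in E1. apply Rmult_integral in E1; tauto.
- rewrite H, Rmult_0_l in E2. symmetry in E2. apply Rmult_integral in E2. lra.
- rewrite H, Rminus_diag, Rmult_0_r in E2. apply Rmult_integral in E2; tauto.
Qed.

(* G depends on y only through y_1^2 and y_2^2. *)
Lemma Nc_zerov (a Cc m : R) (i j : nat) (x : nat -> R) : Nc a Cc m i j x zerov = 0.
Proof.
unfold Nc, G, G1, G2, upd, zerov.
destruct j as [|[|j]]; destruct i; simpl.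
all: apply is_derive_unique; auto_derive; try exact I; ring.
Qed.

Lemma P_fixed_point (a Cc m : R) (i j : nat) (x : nat -> R) : fixed_point a Cc m x ->
  P a Cc m i j x zerov = - 2 * dGdx a Cc m i j x zerov.
Proof.
intros [_ [G0 G1]]. unfold P, sum2; cbv beta.
rewrite G0, G1, !Nc_zerov. unfold zerov. ring.
Qed.

Definition corner (x : nat -> R) : Prop :=
  (x 0%nat = 2 \/ x 0%nat = -2) /\ (x 1%nat = 1 \/ x 1%nat = -1).

Lemma corner_of_eqns (p q : R) : p * q <> 0 ->
  (1 / 2) ^ 2 * p ^ 4 * q ^ 2 = 1 ^ 2 * ((1 / 2) ^ 2 * p ^ 2 + (-1) ^ 2 * q ^ 2) ^ 2 ->
  (-1) ^ 2 * p ^ 2 * q ^ 4 = 1 ^ 2 * ((1 / 2) ^ 2 * p ^ 2 + (-1) ^ 2 * q ^ 2) ^ 2 ->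
  (p = 2 \/ p = -2) /\ (q = 1 \/ q = -1).
Proof.
intros Hpq E1 E2.
assert (Hp : p <> 0) by (contradict Hpq; rewrite Hpq; ring).
assert (Hq : q <> 0) by (contradict Hpq; rewrite Hpq; ring).
assert (Ep : p ^ 2 = 4 * q ^ 2).
{ apply Rmult_eq_reg_l with (p ^ 2 * q ^ 2); [lra |].
  apply Rmult_integral_contrapositive_currified; apply pow_nonzero; auto. }
assert (Eq : q ^ 2 = 1 ^ 2).
{ rewrite Ep in E2.
  apply Rmult_eq_reg_l with (4 * q ^ 4); [lra |].
  apply Rmult_integral_contrapositive_currified; [lra | apply pow_nonzero; auto]. }
split; apply sq_eq_cases; lra.
Qed.

Lemma fixed_point_iff_corner (x : nat -> R) : fixed_point (1 / 2) 1 (-1) x <-> corner x.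
Proof.
rewrite fixed_point_iff_eqns by lra. unfold quad_form, corner. split.
- intros [Hx [E1 E2]]. exact (corner_of_eqns _ _ Hx E1 E2).
- intros [[-> | ->] [-> | ->]]; repeat split; lra.
Qed.

Lemma dGdx_corner (x : nat -> R) (i j : nat) : corner x -> (i < 2)%nat -> (j < 2)%nat ->
  dGdx (1 / 2) 1 (-1) i j x zerov = if Nat.eqb i j then 1 / 8 else 0.
Proof.
intros [[H0 | H0] [H1 | H1]] Hi Hj;
destruct i as [|[|i]]; try lia; destruct j as [|[|j]]; try lia;
unfold dGdx, G, G1, G2; cbv beta iota delta [upd Nat.eqb zerov]; rewrite H0, H1;
(apply is_derive_unique; auto_derive; [repeat split; lra | field; repeat split; lra]).
Qed.

Lemma deviation_eq_corner (xb : nat -> R) (xi dxi : nat -> R -> R) (i : nat) (t : R) :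
  corner xb -> (i < 2)%nat ->
  Derive (dxi i) t
  + 2 * sum2 (fun j => Nc (1 / 2) 1 (-1) i j xb zerov * dxi j t)
  + 2 * sum2 (fun j => dGdx (1 / 2) 1 (-1) i j xb zerov * xi j t)
  = Derive (dxi i) t + (1 / 2) ^ 2 * xi i t.
Proof.
intros Hc Hi. unfold sum2. rewrite !Nc_zerov, !dGdx_corner by (auto; lia).
destruct i as [|[|i]]; [| | lia]; simpl Nat.eqb; lra.
Qed.

Theorem mainTheorem5 :
  let a := 1 / 2 in let Cc := 1 in let m := -1 in
  (forall x : nat -> R,
     fixed_point a Cc m x <->
     ((x 0%nat = 2 /\ x 1%nat = 1) \/ (x 0%nat = 2 /\ x 1%nat = -1) \/
      (x 0%nat = -2 /\ x 1%nat = 1) \/ (x 0%nat = -2 /\ x 1%nat = -1))) /\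
  (forall xb : nat -> R, fixed_point a Cc m xb ->
     (forall i j : nat, (i < 2)%nat -> (j < 2)%nat ->
        Nc a Cc m i j xb zerov = 0 /\
        2 * dGdx a Cc m i j xb zerov = (if Nat.eqb i j then 1 / 4 else 0)) /\
     (forall (xi0 : nat -> R), (xi0 0%nat <> 0 \/ xi0 1%nat <> 0) ->
      forall (xi dxi : nat -> R -> R),
        (forall i t, (i < 2)%nat -> is_derive (xi i) t (dxi i t)) ->
        (forall i t, (i < 2)%nat -> ex_derive (dxi i) t) ->
        (forall i t, (i < 2)%nat ->
           Derive (dxi i) t
           + 2 * sum2 (fun j => Nc a Cc m i j xb zerov * dxi j t)
           + 2 * sum2 (fun j => dGdx a Cc m i j xb zerov * xi j t) = 0) ->
        (forall i, (i < 2)%nat -> xi i 0 = 0 /\ dxi i 0 = xi0 i) ->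
        forall t : R,
          (forall i, (i < 2)%nat -> xi i t = 2 * xi0 i * sin (t / 2)) /\
          (xi 0%nat t ^ 2 + xi 1%nat t ^ 2) / (xi0 0%nat ^ 2 + xi0 1%nat ^ 2)
            = 4 * sin (t / 2) ^ 2) /\
     (forall i j : nat, (i < 2)%nat -> (j < 2)%nat ->
        P a Cc m i j xb zerov = (if Nat.eqb i j then - (1 / 4) else 0)) /\
     jacobi_stable a Cc m xb) /\
  (exists delta : R, 0 < delta /\
     forall t : R, 0 < t < delta -> 4 * sin (t / 2) ^ 2 < t ^ 2).
Proof.
cbv zeta. split; [| split].
- intro x. rewrite fixed_point_iff_corner. unfold corner. tauto.
- intros xb Hfp. assert (Hc := proj1 (fixed_point_iff_corner xb) Hfp).
  assert (HP : forall i j, (i < 2)%nat -> (j < 2)%nat ->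
     P (1 / 2) 1 (-1) i j xb zerov = if Nat.eqb i j then - (1 / 4) else 0).
  { intros i j Hi Hj. rewrite P_fixed_point, dGdx_corner by assumption.
    destruct (Nat.eqb i j); lra. }
  split; [| split; [| split]].
  + intros i j Hi Hj. rewrite Nc_zerov, dGdx_corner by assumption.
    split; [reflexivity | destruct (Nat.eqb i j); lra].
  + intros xi0 Hne xi dxi Hd Hdd Heq Hinit.
    assert (Hsol : forall i t, (i < 2)%nat -> xi i t = 2 * xi0 i * sin (t / 2)).
    { intros i t Hi. destruct (Hinit i Hi) as [H0 H1].
      assert (Hode : forall s, Derive (dxi i) s + (1 / 2) ^ 2 * xi i s = 0)
        by (intro s; rewrite <- (deviation_eq_corner xb xi dxi i s Hc Hi); auto).
      rewrite (harmonic_oscillator_sol (1 / 2) (xi0 i) (xi i) (dxi i) ltac:(lra)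
                 (fun s => Hd i s Hi) (fun s => Hdd i s Hi) Hode H0 H1).
      replace (1 / 2 * t) with (t / 2) by field. field. }
    assert (Hpos : 0 < xi0 0%nat ^ 2 + xi0 1%nat ^ 2).
    { assert (H0 := pow2_ge_0 (xi0 0%nat)). assert (H1 := pow2_ge_0 (xi0 1%nat)).
      destruct Hne as [Hne | Hne]; apply pow2_gt_0 in Hne; lra. }
    intro t. split; [auto |].
    rewrite !Hsol by lia. field. lra.
  + exact HP.
  + intros lam Hlam. rewrite (is_eigenvalue2_scalar _ (- (1 / 4)) lam HP Hlam). simpl. lra.
- exists 1. split; [lra |]. intros t [Ht _].
  assert (Hs := sin_sq_lt (t / 2) ltac:(lra)). lra.
Qed.
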